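(* Let $G$ be a snark and let $e_1$ and $e_2$ be distinct edges of $G$. Let $G(e_1,e_2)$ be the cubic graph obtained from $G$ by subdividing $e_1$ with a new vertex $w_1$, subdividing $e_2$ with a new vertex $w_2$, and adding a new edge $w_1w_2$. Then $G(e_1,e_2)$ is a snark if and only if the graph $G-\{e_1,e_2\}$ (obtained from $G$ by deleting the two edges and keeping all vertices) is not $3$-edge-colourable.
   Context: A snark is a connected cubic graph (loops and parallel edges allowed) which has no proper $3$-edge-colouring. A $3$-edge-colouring of a graph (possibly with vertices of degree less than $3$) is proper if edges sharing an end-vertex receive distinct colours. *)

From mathcomp Require Import all_boot.
Set Implicit Arguments. Unset Strict Implicit. Unset Printing Implicit Defensive.

(* A finite multigraph: vertex set, edge set, and for each edge its two
   end-vertices (an unordered pair, stored as an ordered pair; a loop has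
   both ends equal). *)
Record mgraph := MGraph {
  vert : finType;
  edge : finType;
  endpts : edge -> vert * vert
}.

Section Defs.
Variable G : mgraph.

(* degree counts half-edges: a loop contributes 2 *)
Definition deg (v : vert G) : nat :=
  \sum_(e : edge G) (((endpts e).1 == v) + ((endpts e).2 == v)).

Definition cubic : Prop := forall v : vert G, deg v = 3.

Definition adj (u v : vert G) : bool :=
  [exists e : edge G, (endpts e == (u, v)) || (endpts e == (v, u))].

Definition connected : Prop := forall u v : vert G, connect adj u v.

Definition is_loop (e : edge G) : bool := (endpts e).1 == (endpts e).2.

Definition share_end (e f : edge G) : bool :=
  [exists v : vert G,
     (((endpts e).1 == v) || ((endpts e).2 == v)) &&
     (((endpts f).1 == v) || ((endpts f).2 == v))].

(* proper 3-edge-colouring: edges sharing an end-vertex get distinct colours;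
   a loop shares its end-vertex with itself (two half-edges at the same
   vertex), so a graph with a loop has no proper edge-colouring. *)
Definition proper3 (c : edge G -> 'I_3) : Prop :=
  (forall e : edge G, ~~ is_loop e) /\
  (forall e f : edge G, e != f -> share_end e f -> c e != c f).

Definition colourable3 : Prop := exists c : edge G -> 'I_3, proper3 c.

Definition snark : Prop := [/\ connected, cubic & ~ colourable3].

End Defs.

Definition delete2 (G : mgraph) (e1 e2 : edge G) : mgraph :=
  @MGraph (vert G) {e : edge G | e \notin [:: e1; e2]}
          (fun e => endpts (val e)).

(* G(e1,e2): subdivide e1 by w1 := inr false, e2 by w2 := inr true,
   and add the edge w1 w2 (the element inr tt).  An old edge e is kept as
   (e, false) unless e is e1 or e2, in which case (e, false) and (e, true)
   are its two halves. *)
Definition sub_edge (G : mgraph) (e1 e2 : edge G) : finType :=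
  ({p : edge G * bool | p.2 ==> (p.1 \in [:: e1; e2])} + unit)%type.

Definition sub_endpts (G : mgraph) (e1 e2 : edge G)
    (x : sub_edge e1 e2) : (vert G + bool) * (vert G + bool) :=
  match x with
  | inr _ => (inr false, inr true)
  | inl p =>
      let e := (val p).1 in
      let b := (val p).2 in
      let a := (endpts e).1 in
      let c := (endpts e).2 in
      if e == e1 then (if b then (inr false, inl c) else (inl a, inr false))
      else if e == e2 then (if b then (inr true, inl c) else (inl a, inr true))
      else (inl a, inl c)
  end.

Definition subdiv2 (G : mgraph) (e1 e2 : edge G) : mgraph :=
  @MGraph (vert G + bool)%type (sub_edge e1 e2) (@sub_endpts G e1 e2).

From mathcomp Require Import all_boot.
Set Implicit Arguments. Unset Strict Implicit. Unset Printing Implicit Defensive.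

(* A 3-edge-colouring of G - {e1, e2} misses, at each end-vertex of e1 and e2,
   exactly as many colours as there are removed edge-ends there.  Giving these
   ends distinct missing colours yields a colouring of the darts (half-edges)
   of G that is proper at every vertex.  As G is cubic, every colour then
   occurs at every vertex exactly once, so each colour class has |V(G)| darts,
   an even number; hence each colour occurs an even number of times among the
   four ends of e1 and e2.  If both ends of e1 have the same colour, so do both
   ends of e2, and G is 3-edge-colourable.  Otherwise the ends of e1 and of e2
   carry the same two colours, and giving w1w2 the third colour 3-edge-colours
   G(e1, e2).  Conversely a colouring of G(e1, e2) restricts to G - {e1, e2}. *)

Definition even_counts (a0 a1 a2 a3 : 'I_3) : Prop :=
  forall i, ~~ odd ((a0 == i) + (a1 == i) + (a2 == i) + (a3 == i)).

Lemma exists_third_colour (a b : 'I_3) : exists z : 'I_3, (z != a) && (z != b).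
Proof.
have : 0 < #|~: [set a; b]| by rewrite cardsCs setCK card_ord cards2; case: (a != b).
by case/card_gt0P => z; rewrite !inE negb_or; exists z.
Qed.

Lemma even_counts_eq a0 a1 a2 a3 : even_counts a0 a1 a2 a3 -> a0 = a1 -> a2 = a3.
Proof.
move=> ev E01; move: (ev a2); rewrite -E01 eqxx addnn !oddD odd_double /=.
by rewrite negbK oddb => /eqP ->.
Qed.

Lemma even_counts_neq a0 a1 a2 a3 : even_counts a0 a1 a2 a3 -> a0 != a1 ->
  exists z, [/\ a2 != a3, (z != a0) && (z != a1) & (z != a2) && (z != a3)].
Proof.
move=> ev n01; have [z /andP[z0 z1]] := exists_third_colour a0 a1.
have ev' i : ~~ ((a0 == i) (+) (a1 == i) (+) (a2 == i) (+) (a3 == i)).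
  by move: (ev i); rewrite !oddD !oddb.
have n23 : a2 != a3.
  by apply/eqP => E23; move: (ev' a0); rewrite E23 eqxx eq_sym (negbTE n01); case: (a3 == a0).
exists z; split; rewrite ?z0 ?z1 //; apply/andP; split; apply/eqP => Ez.
all: move: (ev' z) n23; rewrite -Ez eqxx !(eq_sym _ z) (negbTE z0) (negbTE z1) /=;
  by [move=> /negPn -> | rewrite addbT negbK => ->].
Qed.

Section Embedding.
Variables (X Y : finType) (y0 : Y) (A : {set X}) (B : {set Y}).
Hypothesis leAB : #|A| <= #|B|.

Definition embedding (x : X) : Y := nth y0 (enum B) (index x (enum A)).

Lemma embedding_index_lt x : x \in A -> index x (enum A) < size (enum B).
Proof.
move=> Ax; rewrite -cardE (leq_trans _ leAB) //.
by rewrite cardE index_mem mem_enum.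
Qed.

Lemma embedding_mem x : x \in A -> embedding x \in B.
Proof. by move/embedding_index_lt/(mem_nth y0); rewrite mem_enum. Qed.

Lemma embedding_inj : {in A &, injective embedding}.
Proof.
move=> x x' Ax Ax' /eqP; rewrite /embedding nth_uniq ?embedding_index_lt ?enum_uniq //.
by move/eqP; apply: (index_inj x); rewrite mem_enum.
Qed.

End Embedding.

Section Darts.
Variable H : mgraph.

Definition dart := (edge H * bool)%type.

Definition dart_end (d : dart) : vert H :=
  if d.2 then (endpts d.1).2 else (endpts d.1).1.

Definition darts_at (v : vert H) : {set dart} := [set d | dart_end d == v].

Lemma mem_darts_at d v : (d \in darts_at v) = (dart_end d == v).
Proof. by rewrite inE. Qed.

Definition proper_darts (g : dart -> 'I_3) : Prop :=
  forall d d', d != d' -> dart_end d = dart_end d' -> g d != g d'.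

Lemma deg_darts v : deg v = #|darts_at v|.
Proof.
rewrite /deg -sum1dep_card [RHS]big_mkcond.
transitivity (\sum_e \sum_(b : bool) (if dart_end (e, b) == v then 1 else 0)).
  by apply: eq_bigr => e _; rewrite big_bool /=; case: eqP; case: eqP.
by rewrite pair_big; apply: eq_bigr => -[].
Qed.

Lemma sum_card_darts_at : \sum_v #|darts_at v| = #|{: dart}|.
Proof.
rewrite -sum1_card (partition_big dart_end predT) //=.
by apply: eq_bigr => v _; rewrite -sum1dep_card.
Qed.

Lemma is_loop_darts e : is_loop e = (dart_end (e, false) == dart_end (e, true)).
Proof. by []. Qed.

Lemma share_endP e f :
  reflect (exists b b', dart_end (e, b) = dart_end (f, b')) (share_end e f).
Proof.
apply: (iffP existsP) => [[v /andP[/orP He /orP Hf]] | [b [b' Ebb']]].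
  have [b Hb] : exists b, dart_end (e, b) = v by case: He => /eqP; [exists false | exists true].
  have [b' Hb'] : exists b', dart_end (f, b') = v by case: Hf => /eqP; [exists false | exists true].
  by exists b, b'; rewrite Hb Hb'.
exists (dart_end (e, b)); apply/andP; split; last rewrite Ebb'.
  by case: b {Ebb'}; rewrite /dart_end eqxx ?orbT.
by case: b' {Ebb'}; rewrite /dart_end eqxx ?orbT.
Qed.

Lemma proper3_dartsP (c : edge H -> 'I_3) :
  proper3 c <-> proper_darts (fun d => c d.1).
Proof.
split=> [[noloop cP] [e b] [f b'] /= ndd' Edd' | cP].
  have [Eef|nef] := eqVneq e f; last first.
    by apply: cP => //; apply/share_endP; exists b, b'.
  rewrite -{f}Eef in ndd' Edd' *.
  have ne_bb' : b != b' by apply: contra ndd' => /eqP->.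
  have loop_e : is_loop e.
    by rewrite is_loop_darts; case: b b' ne_bb' Edd' {ndd'} => -[] // _ ->.
  by move: (noloop e); rewrite loop_e.
split=> [e | e f nef /share_endP[b [b' Ebb']]]; last first.
  by apply: (cP (e, b) (f, b')) => //; apply: contra nef => /eqP[->].
apply/negP; rewrite is_loop_darts => /eqP loop_e.
by have := cP (e, false) (e, true); rewrite xpair_eqE eqxx => /(_ isT loop_e); rewrite eqxx.
Qed.

Lemma adj_sym : symmetric (@adj H).
Proof. by move=> u v; apply: eq_existsb => e; rewrite orbC. Qed.

Lemma connect_dart_ends x b b' : connect (@adj H) (dart_end (x, b)) (dart_end (x, b')).
Proof.
have ends_adj : adj (dart_end (x, false)) (dart_end (x, true)).
  by apply/existsP; exists x; rewrite -surjective_pairing eqxx.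
have ends_adj' := ends_adj; rewrite adj_sym in ends_adj'.
by case: b; case: b'; rewrite ?connect0 ?connect1.
Qed.

Lemma colourable_of_darts (g : dart -> 'I_3) :
  proper_darts g -> (forall e, g (e, false) = g (e, true)) -> colourable3 H.
Proof.
move=> gP gE; exists (fun e => g (e, false)); apply/proper3_dartsP.
have gE' d : g (d.1, false) = g d by case: d => e [].
by move=> d d'; rewrite !gE'; exact: gP.
Qed.

Hypothesis cubicH : cubic H.

Lemma cubic_card_vert_even : ~~ odd #|vert H|.
Proof.
have : \sum_v #|darts_at v| = #|vert H| * 3.
  by rewrite -sum_nat_const; apply: eq_bigr => v _; rewrite -deg_darts cubicH.
rewrite sum_card_darts_at card_prod card_bool => /(congr1 odd).
by rewrite !oddM andbT andbF => <-.
Qed.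

Section ProperDarts.
Variable g : dart -> 'I_3.
Hypothesis gP : proper_darts g.

Lemma card_darts_at_colour v i : #|[set d in darts_at v | g d == i]| = 1.
Proof.
have g_inj : {in darts_at v &, injective g}.
  move=> d d' /[!inE] /eqP Ed /eqP Ed' Eg.
  by apply: contra_eq Eg => /gP; apply; rewrite Ed Ed'.
have g_onto : g @: darts_at v = setT.
  apply/eqP; rewrite eqEcard subsetT cardsT card_ord card_in_imset //.
  by rewrite -deg_darts cubicH.
have /imsetP[d Dd ->] : i \in g @: darts_at v by rewrite g_onto inE.
suff -> : [set d' in darts_at v | g d' == g d] = [set d] by rewrite cards1.
apply/setP => d'; move: Dd; rewrite !inE => Dd.
apply/andP/eqP => [[Dd' /eqP Eg] | ->]; last by rewrite Dd eqxx.
by apply: g_inj; rewrite ?inE.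
Qed.

Lemma card_colour_class i : #|[set d | g d == i]| = #|vert H|.
Proof.
rewrite -sum1dep_card (partition_big dart_end predT) //= -sum1_card.
apply: eq_bigr => v _; rewrite sum1dep_card -[RHS](card_darts_at_colour v i).
by apply: eq_card => d; rewrite !inE andbC.
Qed.

End ProperDarts.

End Darts.

Section Subdivision.
Variables (G : mgraph) (e1 e2 : edge G).
Hypothesis ne12 : e1 != e2.
Local Notation S := (subdiv2 e1 e2).

Definition slot (e : edge G) : bool := e \in [:: e1; e2].

Definition subdivided (b : bool) : edge G := if b then e2 else e1.

Lemma slot_subdivided b : slot (subdivided b).
Proof. by case: b; rewrite /slot !inE eqxx ?orbT. Qed.

(* The half [p] of a subdivided edge has its old end at [(val p).2] and its
   other end at the new vertex. *)
Lemma dart_end_subdiv2 (p : {p : edge G * bool | p.2 ==> (p.1 \in [:: e1; e2])}) b :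
  dart_end ((inl p : edge S), b) =
  if slot (val p).1 && (b != (val p).2) then inr ((val p).1 == e2)
  else inl (dart_end ((val p).1, b)).
Proof.
case: p => -[e b0] /= Hp; rewrite /dart_end /slot /= !inE.
have [->|ne1] /= := eqVneq e e1; first by rewrite (negbTE ne12); case: b0 {Hp}; case: b.
have [->|ne2] /= := eqVneq e e2; first by case: b0 {Hp}; case: b.
by case: b.
Qed.

Lemma sub_half_subproof (d : dart G) :
  (d.1, d.2 && slot d.1).2 ==> ((d.1, d.2 && slot d.1).1 \in [:: e1; e2]).
Proof. by apply/implyP => /andP[]. Qed.

(* The edge of [G(e1, e2)] carrying the end [d] of an edge of [G]: the [d.2]-half
   if [d.1] is subdivided, [d.1] itself otherwise. *)
Definition sub_half (d : dart G) : edge S :=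
  inl (exist _ (d.1, d.2 && slot d.1) (sub_half_subproof d)).

Definition sub_dart (d : dart G) : dart S := (sub_half d, d.2).

Lemma dart_end_sub_dart d : dart_end (sub_dart d) = inl (dart_end d).
Proof. by case: d => e b; rewrite dart_end_subdiv2 /=; case: b; case: (slot e). Qed.

Lemma sub_dart_inj : injective sub_dart.
Proof. by move=> [e b] [e' b'] [-> _ ->]. Qed.

Lemma darts_at_inl v : darts_at (inl v : vert S) = sub_dart @: darts_at v.
Proof.
apply/setP => -[[[[e b0] Hp]|[]] b]; rewrite inE; last first.
  have -> : (dart_end ((inr tt : edge S), b) == inl v) = false by case: b.
  by apply/esym/negbTE/imsetP => -[d _ []].
rewrite dart_end_subdiv2 /=.
have [/andP[slot_e nbb0] | keep] := boolP (slot e && (b != b0)).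
  apply/esym/negbTE/imsetP => -[[e' b'] _ [Ee Eb0 Eb]].
  by rewrite Eb0 -Ee -Eb slot_e andbT eqxx in nbb0.
have -> : (inl (exist _ (e, b0) Hp), b) = sub_dart (e, b).
  congr (inl _, _); apply: val_inj; congr (_, _).
  by move: Hp keep; rewrite /slot /=; case: b; case: b0; case: (e \in _).
by rewrite mem_imset ?inE //; exact: sub_dart_inj.
Qed.

Lemma inl_sub_half_eq p d :
  ((inl p : edge S) == sub_half d) = (val p == (d.1, d.2 && slot d.1)).
Proof. by []. Qed.

Lemma darts_at_inr b :
  darts_at (inr b : vert S) =
  [set (sub_half (subdivided b, false), true); (sub_half (subdivided b, true), false);
       ((inr tt : edge S), b)].
Proof.
apply/setP => -[[[[e b0] Hp]|[]] b']; rewrite !inE; last by case: b; case: b'.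
rewrite dart_end_subdiv2 /= !xpair_eqE !inl_sub_half_eq /= !xpair_eqE orbF.
move: Hp; rewrite /slot /subdivided /= !inE.
have ne21 := negbTE ne12; rewrite eq_sym in ne21.
have [->|ne1] /= := eqVneq e e1.
  by case: b; case: b0; case: b' => _; rewrite /= ?eqxx ?(negbTE ne12) ?ne21.
have [->|ne2] /= := eqVneq e e2.
  by case: b; case: b0; case: b' => _; rewrite /= ?eqxx ?(negbTE ne12) ?ne21.
by case: b => _ /=; rewrite ?(negbTE ne1) ?(negbTE ne2); reflexivity.
Qed.

Lemma sub_half_kept e b : ~~ slot e -> sub_half (e, b) = sub_half (e, false).
Proof. by move=> /negbTE kept_e; congr inl; apply: val_inj; rewrite /= kept_e andbF. Qed.

Lemma cubic_subdiv2 : cubic G -> cubic S.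
Proof.
move=> cubicG [v|b]; rewrite deg_darts.
  by rewrite darts_at_inl card_imset -?deg_darts //; exact: sub_dart_inj.
by rewrite darts_at_inr setUC !cardsU1 cards1 !inE !xpair_eqE !andbF orbF.
Qed.

Lemma connect_subdiv2_ends (e : edge G) :
  connect (@adj S) (inl (dart_end (e, false))) (inl (dart_end (e, true))).
Proof.
rewrite -!dart_end_sub_dart /sub_dart /=.
have [slot_e|kept_e] := boolP (slot e); last first.
  by rewrite sub_half_kept //; exact: connect_dart_ends.
apply: connect_trans (connect_dart_ends _ false true) _.
rewrite (_ : dart_end (sub_half (e, false), true) = dart_end (sub_half (e, true), false)).
  exact: connect_dart_ends.
by rewrite !dart_end_subdiv2 /= slot_e.
Qed.

Lemma connect_subdiv2_inl u v :
  connect (@adj G) u v -> connect (@adj S) (inl u) (inl v).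
Proof.
move/connectP => [p]; elim: p u => [|w p IHp] u /=; first by move=> _ ->.
move=> /andP[/existsP[e Ee] wp] last_v; apply: connect_trans (IHp w wp last_v).
have := connect_subdiv2_ends e; rewrite /dart_end.
by case/orP: Ee => /eqP -> //=; rewrite (sym_connect_sym (@adj_sym S)).
Qed.

Lemma connected_subdiv2 : connected G -> connected S.
Proof.
move=> connG; pose v0 : vert S := inl (endpts e1).1.
suff to_v0 x : connect (@adj S) x v0.
  by move=> x y; apply: connect_trans (to_v0 x) _; rewrite (sym_connect_sym (@adj_sym S)).
case: x => [u|b]; first exact: connect_subdiv2_inl.
apply: connect_trans (connect_subdiv2_inl (connG (dart_end (subdivided b, false)) _)).
suff <- : dart_end (sub_half (subdivided b, false), true) = inr b.
  by rewrite -[inl _]dart_end_sub_dart; exact: connect_dart_ends.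
by apply/eqP; rewrite -mem_darts_at darts_at_inr !inE eqxx.
Qed.

Lemma colourable_delete2_of_subdiv2 : colourable3 S -> colourable3 (delete2 e1 e2).
Proof.
move=> [c /proper3_dartsP cP]; exists (fun f => c (sub_half (val f, false))).
apply/proper3_dartsP => -[f b] [f' b'] /= nff' Eff'.
rewrite -(sub_half_kept b (valP f)) -(sub_half_kept b' (valP f')).
apply: (cP (sub_dart (val f, b)) (sub_dart (val f', b'))); last first.
  by rewrite !dart_end_sub_dart; congr inl.
by rewrite (inj_eq sub_dart_inj) xpair_eqE val_eqE -xpair_eqE.
Qed.

Section ColourFromDarts.
Variables (g : dart G -> 'I_3) (z : 'I_3).
Hypothesis gP : proper_darts g.
Hypothesis g_kept : forall e, ~~ slot e -> g (e, false) = g (e, true).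
Hypothesis g_subdivided : forall b,
  [/\ g (subdivided b, false) != g (subdivided b, true),
      z != g (subdivided b, false) & z != g (subdivided b, true)].

Definition subdiv2_colour (x : edge S) : 'I_3 :=
  if x is inl p then g (val p) else z.

Lemma subdiv2_colour_half d : subdiv2_colour (sub_half d) = g d.
Proof.
case: d => e b; have [slot_e|kept_e] := boolP (slot e).
  by rewrite /= slot_e andbT.
by rewrite sub_half_kept //=; case: b; rewrite ?g_kept.
Qed.

Lemma colourable_subdiv2_of_darts : colourable3 S.
Proof.
exists subdiv2_colour; apply/proper3_dartsP => x y nxy Exy.
case Ex: (dart_end x) Exy => [v|b] Ey.
  have /imsetP[d _ Ed] : x \in sub_dart @: darts_at v by rewrite -darts_at_inl inE Ex.
  have /imsetP[d' _ Ed'] : y \in sub_dart @: darts_at v by rewrite -darts_at_inl inE -Ey.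
  rewrite {}Ed {}Ed' !dart_end_sub_dart in nxy Ex Ey *.
  change (subdiv2_colour (sub_half d) != subdiv2_colour (sub_half d')).
  rewrite !subdiv2_colour_half; apply: gP; first by apply: contra nxy => /eqP ->.
  by case: Ex Ey => -> [].
move: nxy; have := mem_darts_at x (inr b); have := mem_darts_at y (inr b).
rewrite darts_at_inr {}Ex -{}Ey eqxx !inE.
have [g12 z1 z2] := g_subdivided b.
move=> /orP[/orP[]|] /eqP-> /orP[/orP[]|] /eqP-> nxy;
  rewrite ?subdiv2_colour_half /=;
  first [done | by rewrite eq_sym | by rewrite eqxx in nxy].
Qed.

End ColourFromDarts.

End Subdivision.

Section Extension.
Variables (G : mgraph) (e1 e2 : edge G).
Hypotheses (ne12 : e1 != e2) (cubicG : cubic G).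
Variable c : edge (delete2 e1 e2) -> 'I_3.
Hypothesis cP : proper3 c.
Local Notation slot := (slot e1 e2).

(* Junk value [ord0] on [e1] and [e2]. *)
Definition kept_colour (e : edge G) : 'I_3 :=
  if insub e is Some f then c f else ord0.

Lemma kept_colour_proper d d' : ~~ slot d.1 -> ~~ slot d'.1 -> d != d' ->
  dart_end d = dart_end d' -> kept_colour d.1 != kept_colour d'.1.
Proof.
move=> kd kd' ndd' Edd'; rewrite /kept_colour !insubT.
apply: (proper3_dartsP c).1 cP (Sub d.1 kd, d.2) (Sub d'.1 kd', d'.2) _ Edd'.
by apply: contra ndd' => /eqP[E1 E2]; rewrite [d]surjective_pairing [d']surjective_pairing E1 E2.
Qed.

Definition slot_darts : {set dart G} := [set d | slot d.1].

Definition present_colours v : {set 'I_3} :=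
  [set kept_colour d.1 | d in darts_at v :\: slot_darts].

Definition slot_colour (d : dart G) : 'I_3 :=
  embedding ord0 (darts_at (dart_end d) :&: slot_darts) (~: present_colours (dart_end d)) d.

Definition extended_colour (d : dart G) : 'I_3 :=
  if slot d.1 then slot_colour d else kept_colour d.1.

Lemma card_slot_darts_at v :
  #|darts_at v :&: slot_darts| <= #|~: present_colours v|.
Proof.
have kept_inj : {in darts_at v :\: slot_darts &, injective (fun d => kept_colour d.1)}.
  move=> d d' /[!inE] /andP[kd /eqP Ed] /andP[kd' /eqP Ed'] Ecol.
  by apply: contra_eq Ecol => /kept_colour_proper; apply => //; rewrite Ed Ed'.
have card_kept := cardsC (present_colours v).
rewrite card_ord card_in_imset // in card_kept.
have card_split := cardsID slot_darts (darts_at v).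
rewrite -deg_darts cubicG in card_split.
by rewrite -(leq_add2r #|darts_at v :\: slot_darts|) card_split addnC card_kept.
Qed.

Lemma extended_colour_proper : proper_darts extended_colour.
Proof.
move=> d d' ndd' Edd'; rewrite /extended_colour.
have slot_mem x : slot x.1 -> x \in darts_at (dart_end x) :&: slot_darts.
  by move=> sx; rewrite in_setI mem_darts_at eqxx in_set.
have kept_mem x : ~~ slot x.1 -> kept_colour x.1 \in present_colours (dart_end x).
  by move=> kx; apply: imset_f; rewrite in_setD mem_darts_at eqxx in_set kx.
have missing x : slot x.1 -> slot_colour x \notin present_colours (dart_end x).
  by move=> sx; rewrite -in_setC embedding_mem ?card_slot_darts_at ?slot_mem.
case: ifP => [sd | /negbT kd]; case: ifP => [sd' | /negbT kd'].
- have Sd : d \in darts_at (dart_end d') :&: slot_darts by rewrite -Edd' slot_mem.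
  rewrite /slot_colour Edd'; apply: contra ndd' => /eqP.
  by move/(embedding_inj (card_slot_darts_at _) Sd (slot_mem d' sd')) ->.
- by apply: contraNneq (missing d sd) => ->; rewrite Edd' kept_mem.
- by apply: contraNneq (missing d' sd') => <-; rewrite -Edd' kept_mem.
- exact: kept_colour_proper.
Qed.

Local Notation g := extended_colour.

Lemma even_counts_slot_colours :
  even_counts (g (e1, false)) (g (e1, true)) (g (e2, false)) (g (e2, true)).
Proof.
move=> i; have := cubic_card_vert_even cubicG.
have -> : #|vert G| = \sum_e \sum_b (g (e, b) == i : nat).
  rewrite -(card_colour_class cubicG extended_colour_proper i) -sum1dep_card big_mkcond.
  by rewrite pair_big; apply: eq_bigr => -[e b] _; case: eqP.
rewrite (bigID slot) /= oddD.
have kept_even : ~~ odd (\sum_(e | ~~ slot e) \sum_b (g (e, b) == i : nat)).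
  rewrite (eq_bigr (fun e => 2 * (kept_colour e == i))) => [|e ke].
    by rewrite -big_distrr /= oddM.
  by rewrite big_bool /extended_colour /= (negbTE ke); case: eqP.
rewrite (negbTE kept_even) addbF (bigD1 e1 (slot_subdivided _ _ false)) /=.
rewrite (bigD1 e2) /=; last by rewrite (slot_subdivided _ _ true) eq_sym.
rewrite [X in _ + (_ + X)]big_pred0 => [|e]; last first.
  by rewrite /slot !inE; case: (e =P e2); case: (e =P e1).
rewrite !big_bool /= ?add0n ?addn0.
by rewrite (addnC (g (e1, true) == i)) (addnC (g (e2, true) == i)) !addnA.
Qed.

Lemma colourable_subdiv2_of_delete2 : ~ colourable3 G -> colourable3 (subdiv2 e1 e2).
Proof.
move=> nG; have ev := even_counts_slot_colours.
have g_kept e : ~~ slot e -> g (e, false) = g (e, true).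
  by move=> /negbTE kept_e; rewrite /extended_colour /= kept_e.
have [E1 | n1] := eqVneq (g (e1, false)) (g (e1, true)).
  case: nG; apply: colourable_of_darts extended_colour_proper _ => e.
  have [|/g_kept //] := boolP (slot e).
  by rewrite /slot !inE => /orP[] /eqP ->; [|exact: even_counts_eq ev E1].
have [z [n2 /andP[z1 z1'] /andP[z2 z2']]] := even_counts_neq ev n1.
by apply: (colourable_subdiv2_of_darts ne12 extended_colour_proper g_kept (z := z)) => -[].
Qed.

End Extension.

Theorem proposition4 (G : mgraph) (e1 e2 : edge G) :
  snark G -> e1 != e2 ->
  (snark (subdiv2 e1 e2) <-> ~ colourable3 (delete2 e1 e2)).
Proof.
move=> [connG cubicG uncolG] ne12; split.
  move=> [_ _ uncolS] [c cP]; apply: uncolS.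
  exact: (colourable_subdiv2_of_delete2 ne12 cubicG cP uncolG).
move=> uncolD; split; first exact: connected_subdiv2 ne12 connG.
  exact: cubic_subdiv2 cubicG.
by move/(colourable_delete2_of_subdiv2 ne12).
Qed.
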